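(* Let $t\geqslant 1$ and $k$ be integers with $1\leqslant k\leqslant \frac{2t+1}{3}$. Then $$\sum_{j=0}^{k-1}\binom{2t+1-3k}{t-1-3j}\binom{2k}{1+2j}\leqslant 2\binom{2t-2}{t-1}.$$
   Context: Binomial convention: $\binom{0}{0}=1$ and $\binom{p}{q}=0$ whenever $q<0$, $p<0$ or $p<q$. *)

From Stdlib Require Import ZArith.
From mathcomp Require Import all_boot.

Definition binZ (p q : Z) : nat :=
  if ((q <? 0) || (p <? 0) || (p <? q))%Z then 0%N
  else 'C(Z.to_nat p, Z.to_nat q).


From Stdlib Require Import ZArith.
From mathcomp Require Import all_boot.
From Stdlib Require Import Lia.
From mathcomp Require Import zify.

(* Write [n := 2t+1-3k] and [midbin n := C(n, n/2)].  Each factor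
   [C(n, .)] is at most [midbin n], and the odd-indexed binomials of [2k] sum
   to [2^(2k-1) = 2 * 4^(k-1)].  Central binomials are supermultiplicative,
   [midbin m * midbin n <= midbin (m + n)] (one term of Vandermonde's
   convolution), and [4^K <= midbin (3K)] for [K <> 1]; hence
   [midbin n * 4^(k-1) <= midbin (2t-2) = C(2t-2, t-1)].  For [k = 2] the
   number [n] is odd and [4 * midbin n <= midbin (n + 3)] is used instead. *)

Definition midbin n := 'C(n, n %/ 2).

Lemma leq_mul_bin m n i j : j <= i -> 'C(m, j) * 'C(n, i - j) <= 'C(m + n, i).
Proof.
move=> le_ji; rewrite -Vandermonde.
have lt_ji : j < i.+1 by lia.
by rewrite (bigD1 (Ordinal lt_ji)) //= leq_addr.
Qed.

Lemma leq_bin_succ n q : q.*2.+2 <= n -> 'C(n, q) <= 'C(n, q.+1).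
Proof.
move=> hq; rewrite -(@leq_pmul2l q.+1) // mul_bin_left.
by apply: leq_mul => //; lia.
Qed.

Lemma leq_bin_half n q : q <= n %/ 2 -> 'C(n, q) <= midbin n.
Proof.
rewrite /midbin => /subnKC; move: (n %/ 2 - q) => d.
elim: d q => [|d IHd] q hd; first by rewrite -hd addn0.
by apply: leq_trans (leq_bin_succ n q _) (IHd q.+1 _); lia.
Qed.

Lemma leq_bin_midbin n q : 'C(n, q) <= midbin n.
Proof.
have [le_qh | lt_hq] := leqP q (n %/ 2); first exact: leq_bin_half.
have [le_qn | lt_nq] := leqP q n; last by rewrite bin_small.
by rewrite -bin_sub //; apply: leq_bin_half; lia.
Qed.

Lemma midbin_sym n : 'C(n, n - n %/ 2) = midbin n.
Proof. by rewrite bin_sub //; lia. Qed.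

Lemma leq_midbinM m n : midbin m * midbin n <= midbin (m + n).
Proof.
(* When [m] and [n] are both odd, [m %/ 2 + n %/ 2] falls one short of
   [(m + n) %/ 2]; the symmetric index [n - n %/ 2] closes the gap. *)
have [/andP[odd_m odd_n] | even_mn] := boolP (odd m && odd n).
  rewrite -[midbin n]midbin_sym.
  have -> : n - n %/ 2 = (m + n) %/ 2 - m %/ 2 by lia.
  by apply: leq_mul_bin; lia.
rewrite /midbin; have -> : n %/ 2 = (m + n) %/ 2 - m %/ 2.
  by move: even_mn; rewrite negb_and => /orP[/negPf | /negPf]; lia.
by apply: leq_mul_bin; lia.
Qed.

Lemma leq_exp4_midbin3 K : K != 1 -> 4 ^ K <= midbin (3 * K).
Proof.
elim/ltn_ind: K => [[|[|[|[|K]]]]] // IH hK.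
have le_4K : 4 ^ K.+2 <= midbin (3 * K.+2) by apply: IH => //; lia.
rewrite (_ : 3 * K.+4 = 3 * K.+2 + 6); last by lia.
apply: leq_trans (leq_midbinM (3 * K.+2) 6).
by rewrite (_ : 4 ^ K.+4 = 4 ^ K.+2 * 16) ?leq_mul // !expnS; lia.
Qed.

Lemma leq_midbin_odd_add3 m : odd m -> 4 * midbin m <= midbin (m + 3).
Proof.
move=> odd_m; have [s ->] : exists s, m = s.*2.+1 by exists m./2; lia.
have -> : midbin (s.*2.+1 + 3) = 'C(s.*2.+3, s.+2) + 'C(s.*2.+3, s.+1).
  by rewrite /midbin -binS; congr 'C(_, _); lia.
have -> : midbin s.*2.+1 = 'C(s.*2.+1, s) by rewrite /midbin; congr 'C(_, _); lia.
have sym : 'C(s.*2.+1, s.+1) = 'C(s.*2.+1, s).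
  by rewrite -bin_sub; [congr 'C(_, _) | ]; lia.
have le1 := leq_mul_bin s.*2.+1 2 s.+1 s (leqnSn s).
have le2 := leq_mul_bin s.*2.+1 2 s.+2 s.+1 (leqnSn s.+1).
rewrite subSnn bin1 addn2 in le1; rewrite subSnn bin1 addn2 sym in le2.
lia.
Qed.

Lemma leq_midbin_exp4 n K :
  (K = 1 -> odd n) -> midbin n * 4 ^ K <= midbin (n + 3 * K).
Proof.
have [-> odd_n | K_neq1 _] := eqVneq K 1.
  by rewrite mulnC leq_midbin_odd_add3 ?odd_n.
apply: leq_trans (leq_midbinM n (3 * K)).
by rewrite leq_mul2l leq_exp4_midbin3 ?orbT.
Qed.

Lemma sum_bin m : \sum_(0 <= i < m.+1) 'C(m, i) = 2 ^ m.
Proof.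
rewrite -(addn1 1) expnDn big_mkord.
by apply: eq_bigr => i _; rewrite !exp1n !muln1.
Qed.

Lemma big_nat_pairs (f : nat -> nat) N :
  \sum_(0 <= j < N) (f j.*2 + f j.*2.+1) = \sum_(0 <= i < N.*2) f i.
Proof.
elim: N => [|N IHN]; first by rewrite !big_geq.
by rewrite doubleS !big_nat_recr //= IHN addnA.
Qed.

Lemma sum_bin_odd K : \sum_(0 <= j < K.+1) 'C(K.*2.+2, j.*2.+1) = 2 ^ K.*2.+1.
Proof.
rewrite -sum_bin -doubleS -big_nat_pairs.
by apply: eq_bigr => j _; rewrite binS addnC.
Qed.

Lemma leq_binZ p q : binZ p q <= 'C(Z.to_nat p, Z.to_nat q).
Proof. by rewrite /binZ; case: ifP. Qed.

Lemma binZE p q : (0 <= q <= p)%Z -> binZ p q = 'C(Z.to_nat p, Z.to_nat q).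
Proof.
move=> hpq; rewrite /binZ.
by case: (Z.ltb_spec q 0); case: (Z.ltb_spec p 0); case: (Z.ltb_spec p q); try lia.
Qed.

Theorem lemma5 (t k : Z) :
  (1 <= t)%Z -> (1 <= k)%Z -> (3 * k <= 2 * t + 1)%Z ->
  (\sum_(0 <= j < Z.to_nat k)
      binZ (2 * t + 1 - 3 * k) (t - 1 - 3 * Z.of_nat j) *
      binZ (2 * k) (1 + 2 * Z.of_nat j)
   <= 2 * binZ (2 * t - 2) (t - 1))%N.
Proof.
move=> ht hk htk.
have [T eT] : exists T : nat, t = (Z.of_nat T + 1)%Z by exists (Z.to_nat (t - 1)); lia.
have [K eK] : exists K : nat, k = (Z.of_nat K + 1)%Z by exists (Z.to_nat (k - 1)); lia.
have le_3K_2T : 3 * K <= 2 * T by lia.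
have -> : Z.to_nat k = K.+1 by lia.
have -> : binZ (2 * t - 2) (t - 1) = midbin (2 * T).
  rewrite binZE; last by lia.
  have -> : Z.to_nat (2 * t - 2) = 2 * T by lia.
  by have -> : Z.to_nat (t - 1) = 2 * T %/ 2 by lia.
have le_sum : \sum_(0 <= j < K.+1)
      binZ (2 * t + 1 - 3 * k) (t - 1 - 3 * Z.of_nat j) *
      binZ (2 * k) (1 + 2 * Z.of_nat j)
    <= \sum_(0 <= j < K.+1) midbin (2 * T - 3 * K) * 'C(K.*2.+2, j.*2.+1).
  apply: leq_sum => j _; apply: leq_mul; apply: leq_trans (leq_binZ _ _) _.
    have -> : Z.to_nat (2 * t + 1 - 3 * k) = 2 * T - 3 * K by lia.
    exact: leq_bin_midbin.
  have -> : Z.to_nat (2 * k) = K.*2.+2 by lia.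
  by have -> : Z.to_nat (1 + 2 * Z.of_nat j) = j.*2.+1 by lia.
apply: leq_trans le_sum _.
rewrite -big_distrr /= sum_bin_odd expnS -mul2n expnM mulnCA leq_mul2l /=.
apply: leq_trans (leq_midbin_exp4 _ _ _) _; first lia.
by rewrite subnK.
Qed.
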